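(* Let $k\le l$ be positive integers with $\gcd(k,l)=1$, let $n\ge1$ and $m\ge0$ be integers, and write $m=qn+r$ with integers $q\ge 0$, $0\le r<n$. Then $$U^{k,l}(m,n)\le \max\bigl(nkq,\ nkq+r(k+l)-nl\bigr).$$
   Context: $\mathcal D^{k,l}(m,n)$ denotes the set of all $nk\times nl$ matrices with nonnegative integer entries all of whose row sums equal $ml$ and all of whose column sums equal $mk$. For an $s\times t$ matrix $A=(a_{ij})$ with $s\le t$, a transversal of $A$ is a set of entries $T=\{a_{1i_1},\dots,a_{si_s}\}$ with $i_1,\dots,i_s\in\{1,\dots,t\}$ pairwise distinct, and $|T|=a_{1i_1}+\cdots+a_{si_s}$. Define ${\rm tropdet}(A)=\min_T|T|$ over all transversals $T$ of $A$, and $U^{k,l}(m,n)=\max_{A\in\mathcal D^{k,l}(m,n)}{\rm tropdet}(A)$. *)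

From mathcomp Require Import all_boot all_order all_algebra.
Set Implicit Arguments. Unset Strict Implicit. Unset Printing Implicit Defensive.

(* A transversal of an s x t matrix (s <= t) is given by an injective map
   sigma : 'I_s -> 'I_t (row i picks column sigma i); its weight is |T|. *)
Definition transversal_weight (s t : nat) (A : 'M[nat]_(s, t))
  (sigma : {ffun 'I_s -> 'I_t}) : nat := \sum_(i < s) A i (sigma i).

(* The neutral element of the
   iterated min is the sum of all entries, which bounds every transversal
   weight from above, so (when s <= t, i.e. transversals exist) this is
   exactly the minimum. *)
Definition tropdet (s t : nat) (A : 'M[nat]_(s, t)) : nat :=
  \big[minn/(\sum_(i < s) \sum_(j < t) A i j)]_(sigma : {ffun 'I_s -> 'I_t} | injectiveb sigma)
     transversal_weight A sigma.

Definition inD (k l m n : nat) (A : 'M[nat]_(n * k, n * l)) : Prop :=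
  (forall i, \sum_(j < n * l) A i j = m * l) /\
  (forall j, \sum_(i < n * k) A i j = m * k).

(* U^{k,l}(m,n) = max over D^{k,l}(m,n) of tropdet.  We express "U <= b" as
   "every A in D has tropdet A <= b" (D is nonempty: the constant-m matrix). *)
Definition U_le (k l m n : nat) (b : int) : Prop :=
  forall A : 'M[nat]_(n * k, n * l), @inD k l m n A -> ((tropdet A)%:Z <= b)%R.

From mathcomp Require Import all_boot all_order all_algebra.
From mathcomp Require Import zify ring.
Set Implicit Arguments. Unset Strict Implicit. Unset Printing Implicit Defensive.

Import Order.TTheory GRing.Theory Num.Theory.

(* Pad A with nl - nk zero rows. Egervary's theorem, obtained from Hall's
   marriage theorem by the Hungarian method, gives integer potentials with
   u_i - p_j <= A_ij and a transversal on which equality holds; after the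
   normalisation min p = 0 its weight, hence tropdet A, is at most
   sum u - sum p.  With L = max u, the column sums give
   sum u <= min (mk, nkL) and a row attaining L gives sum p >= max (0, nlL - ml);
   comparing L with q yields the two terms of the bound. *)

Section HallMarriage.
Variables (R C : finType) (E : R -> C -> bool).
Implicit Types (A S T : {set R}) (B N : {set C}) (f : R -> C).

Definition nbr (B : {set C}) (S : {set R}) : {set C} :=
  [set j in B | [exists i in S, E i j]].

Definition hall_condition (A : {set R}) (B : {set C}) : Prop :=
  forall S, S \subset A -> #|S| <= #|nbr B S|.

Definition matching (A : {set R}) (B : {set C}) (f : R -> C) : Prop :=
  {in A &, injective f} /\ forall i, i \in A -> f i \in B /\ E i (f i).

Lemma nbr_sub B S : nbr B S \subset B.
Proof. by apply/subsetP=> j; rewrite inE => /andP[]. Qed.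

Lemma nbrU B S T : nbr B (S :|: T) = nbr B S :|: nbr B T.
Proof.
apply/setP=> j; rewrite !inE; case: (j \in B) => //=.
apply/existsP/orP => [[i /andP[]]|].
  by rewrite inE => /orP[] Hi Ej; [left|right]; apply/existsP; exists i; rewrite Hi.
by case=> /existsP[i /andP[Hi Ej]]; exists i; rewrite inE Hi ?orbT.
Qed.

Lemma nbrD B N S : nbr (B :\: N) S = nbr B S :\: N.
Proof. by apply/setP=> j; rewrite !inE; case: (j \in N); case: (j \in B). Qed.

Lemma matching_nbr A B f : matching A B f -> matching A (nbr B A) f.
Proof.
move=> [injf Hf]; split=> // i iA; have [fiB Eif] := Hf i iA.
by split=> //; rewrite inE fiB; apply/existsP; exists i; rewrite iA.
Qed.

Lemma matching_split A S B B1 f1 f2 :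
  S \subset A -> B1 \subset B ->
  matching S B1 f1 -> matching (A :\: S) (B :\: B1) f2 ->
  matching A B (fun i => if i \in S then f1 i else f2 i).
Proof.
move=> sSA sB1B [inj1 H1] [inj2 H2].
have DS i : i \in A -> i \notin S -> i \in A :\: S by rewrite inE => -> ->.
have sep i j : i \in S -> j \in A -> j \notin S -> f1 i != f2 j.
  move=> iS jA jS; have [+ _] := H1 i iS; have [+ _] := H2 j (DS j jA jS).
  by rewrite inE => /andP[f2B1 _] f1B1; apply: contraNneq f2B1 => <-.
split=> [i j iA jA /=|i iA].
  case: (boolP (i \in S)) => iS; case: (boolP (j \in S)) => jS.
  - exact: inj1.
  - by move/eqP; rewrite (negbTE (sep _ _ iS jA jS)).
  - by move/esym/eqP; rewrite (negbTE (sep _ _ jS iA iS)).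
  - exact: inj2 (DS _ iA iS) (DS _ jA jS).
case: ifP => iS; first by have [/(subsetP sB1B) ? ?] := H1 i iS.
by have [+ ?] := H2 i (DS i iA (negbT iS)); rewrite inE => /andP[].
Qed.

Lemma hall_condition_sub A S B :
  hall_condition A B -> S \subset A -> hall_condition S B.
Proof. by move=> hallAB sSA T sTS; apply/hallAB/(subset_trans sTS). Qed.

Lemma hall_condition_tight A S B :
  hall_condition A B -> S \subset A -> #|nbr B S| <= #|S| ->
  hall_condition (A :\: S) (B :\: nbr B S).
Proof.
move=> hallAB sSA tight T sT; rewrite nbrD.
have dTS : T :&: S = set0.
  apply/setP=> x; rewrite !inE; apply/andP=> -[xT xS].
  by move: (subsetP sT x xT); rewrite inE xS.
have := hallAB (T :|: S); rewrite nbrU cardsU dTS cards0 subn0.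
have -> : T :|: S \subset A by rewrite subUset sSA (subset_trans sT (subsetDl _ _)).
have := cardsUI (nbr B T) (nbr B S); have := cardsD (nbr B T) (nbr B S).
have := subset_leq_card (subsetIr (nbr B T) (nbr B S)).
by move: tight; lia.
Qed.

Lemma hall_condition_slack A a b B :
  (forall S, S \subset A -> S != set0 -> S != A -> #|S| < #|nbr B S|) ->
  a \in A -> hall_condition (A :\ a) (B :\ b).
Proof.
move=> slack aA T sT; rewrite nbrD.
have [->|[x xT]] := set_0Vmem T; first by rewrite cards0.
have T_ne0 : T != set0 by apply/set0Pn; exists x.
have T_neA : T != A.
  by apply/eqP=> TA; have := subsetP sT a; rewrite TA aA !inE eqxx => /(_ isT).
have := slack T (subset_trans sT (subsetDl _ _)) T_ne0 T_neA.
by have := cardsD1 b (nbr B T); case: (b \in nbr B T) => /=; lia.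
Qed.

Lemma hall_marriage (c0 : C) A B : hall_condition A B -> exists f, matching A B f.
Proof.
have [n] := ubnP #|A|; elim: n A B => // n IH A B /ltnSE leAn hallAB.
have [A0|[a aA]] := set_0Vmem A; first by exists (fun=> c0); split=> i; rewrite A0 inE.
case: (boolP [exists S : {set R},
  [&& S \subset A, S != set0, S != A & #|nbr B S| <= #|S|]]).
  case/existsP=> S /and4P[sSA S_ne0 S_neA tight].
  have ltSA : #|S| < #|A| by apply: proper_card; rewrite properEneq S_neA.
  have ltDA : #|A :\: S| < #|A|.
    rewrite cardsD (setIidPr sSA); move: S_ne0 ltSA; rewrite -card_gt0; lia.
  have [f1 m1] := IH S B (leq_trans ltSA leAn) (hall_condition_sub hallAB sSA).
  have [f2 m2] := IH _ _ (leq_trans ltDA leAn) (hall_condition_tight hallAB sSA tight).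
  exists (fun i => if i \in S then f1 i else f2 i).
  exact: matching_split sSA (nbr_sub B S) (matching_nbr m1) m2.
rewrite negb_exists => /forallP no_tight.
have slack S : S \subset A -> S != set0 -> S != A -> #|S| < #|nbr B S|.
  by move=> sSA S_ne0 S_neA; have := no_tight S; rewrite sSA S_ne0 S_neA ltnNge.
have [b bN] : exists b, b \in nbr B [set a].
  by apply/set0Pn; rewrite -card_gt0 (leq_trans _ (hallAB _ _)) ?cards1 ?sub1set.
have ltDA : #|A :\ a| < #|A| by rewrite (cardsD1 a A) aA.
have [f2 m2] := IH _ _ (leq_trans ltDA leAn) (@hall_condition_slack A a b B slack aA).
exists (fun i => if i \in [set a] then b else f2 i).
apply: matching_split m2; rewrite ?sub1set ?(subsetP (nbr_sub _ _) b bN) //.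
split=> [i j /set1P-> /set1P-> //|i /set1P->]; split; first exact: set11.
by move: bN; rewrite inE => /andP[_ /existsP[a' /andP[/set1P-> ->]]].
Qed.
End HallMarriage.

Section DoubleSums.
Variables (R C : finType) (a : R -> C -> nat).

Lemma sum_add_row (c : R -> nat) :
  \sum_i \sum_j (a i j + c i) = \sum_i \sum_j a i j + #|C| * \sum_i c i.
Proof.
rewrite big_distrr -big_split /=; apply: eq_bigr => i _.
by rewrite big_split /= sum_nat_const.
Qed.

Lemma sum_add_col (d : C -> nat) :
  \sum_i \sum_j (a i j + d j) = \sum_i \sum_j a i j + #|R| * \sum_j d j.
Proof.
rewrite -sum_nat_const -big_split /=; apply: eq_bigr => i _.
by rewrite big_split.
Qed.

End DoubleSums.

Lemma sum_mem_card (T : finType) (S : {set T}) : \sum_i (i \in S : nat) = #|S|.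
Proof. by rewrite -big_mkcond sum1_card. Qed.

Section DeficientShift.
Variables (R C : finType) (a : R -> C -> nat) (S : {set R}).

Definition zero_entry i j := a i j == 0.

Let N := nbr zero_entry setT S.

(* The subtraction never truncates: by definition of [N], an entry in a row of
   [S] and a column outside [N] is nonzero. *)
Definition deficient_shift i j := a i j + (j \in N) - (i \in S).

Lemma deficient_shiftE i j :
  deficient_shift i j + (i \in S) = a i j + (j \in N).
Proof.
rewrite subnK //; case: (boolP (i \in S)) => iS //; case: (boolP (j \in N)) => jN.
  by rewrite addn1.
rewrite addn0 lt0n; apply: contraNneq jN => aij0.
by rewrite !inE /=; apply/existsP; exists i; rewrite iS; apply/eqP.
Qed.

Lemma deficient_shift_total : #|R| = #|C| -> #|N| < #|S| ->
  \sum_i \sum_j deficient_shift i j < \sum_i \sum_j a i j.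
Proof.
move=> cardRC defS.
have e1 := sum_add_row deficient_shift (fun i => i \in S : nat).
have e2 := sum_add_col a (fun j => j \in N : nat).
have e12 : \sum_i \sum_j (deficient_shift i j + (i \in S)) =
           \sum_i \sum_j (a i j + (j \in N)).
  by apply: eq_bigr => i _; apply: eq_bigr => j _; apply: deficient_shiftE.
have : #|R| * #|N| < #|C| * #|S|.
  rewrite -cardRC ltn_pmul2l //.
  exact: leq_trans (leq_ltn_trans (leq0n _) defS) (max_card (mem S)).
move: e1 e2 e12; rewrite !sum_mem_card; lia.
Qed.

End DeficientShift.

Lemma egervary (R C : finType) (c0 : C) (a : R -> C -> nat) : #|R| = #|C| ->
  exists u : R -> int, exists p : C -> int, exists s : R -> C,
    [/\ injective s, forall i j, (u i - p j <= (a i j)%:Z)%R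
      & forall i, (u i - p (s i) = (a i (s i))%:Z)%R].
Proof.
move=> cardRC; have [N] := ubnP (\sum_i \sum_j a i j); elim: N a => // N IH a lt_aN.
case: (boolP [forall S : {set R}, #|S| <= #|nbr (zero_entry a) setT S|]).
  move=> /forallP hall.
  have [s [injs Hs]] := hall_marriage c0 (fun S (_ : S \subset setT) => hall S).
  exists (fun=> 0%R), (fun=> 0%R), s; split=> [i j e|i j|i].
  - by apply: injs; rewrite ?inE.
  - by rewrite subr0.
  - by have [_ /eqP ->] := Hs i (in_setT i); rewrite subr0.
rewrite negb_forall => /existsP[S]; rewrite -ltnNge => defS.
have [u [p [s [injs feas tight]]]] :=
  IH (deficient_shift a S) (leq_trans (deficient_shift_total cardRC defS) lt_aN).
exists (fun i => u i + (i \in S : nat)%:Z)%R,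
  (fun j => p j + (j \in nbr (zero_entry a) setT S : nat)%:Z)%R, s.
split=> // [i j|i].
  by have := feas i j; have := deficient_shiftE a S i j; lia.
by have := tight i; have := deficient_shiftE a S i (s i); lia.
Qed.

Lemma tropdet_le_weight s t (A : 'M[nat]_(s, t)) (sigma : {ffun 'I_s -> 'I_t}) :
  injectiveb sigma -> tropdet A <= transversal_weight A sigma.
Proof. by rewrite /tropdet -minEnat -leEnat; apply: bigmin_le_cond. Qed.

Lemma sum_sub_bij (R C : finType) (u : R -> int) (p : C -> int) (s : R -> C) :
  bijective s -> (\sum_x (u x - p (s x)) = \sum_x u x - \sum_y p y)%R.
Proof. by move=> bij_s; rewrite sumrB (reindex s (onW_bij _ bij_s)). Qed.

Lemma tropdet_le_dual s t (A : 'M[nat]_(s, t)) : s <= t -> 0 < t ->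
  exists u : 'I_s -> int, exists p : 'I_t -> int, exists j0,
  [/\ forall i j, (u i - p j <= (A i j)%:Z)%R, forall j, (0 <= p j)%R, p j0 = 0%R &
      ((tropdet A)%:Z <= \sum_i u i - \sum_j p j)%R].
Proof.
move=> le_st t_gt0.
pose a (x : 'I_s + 'I_(t - s)) (j : 'I_t) := if x is inl i then A i j else 0.
have card_pad : #|{: 'I_s + 'I_(t - s)}| = #|'I_t| by rewrite card_sum !card_ord subnKC.
have [u [p [sg [inj_sg feas tight]]]] := egervary (Ordinal t_gt0) a card_pad.
have [j0 _ p_min] := arg_minP p (isT : predT (Ordinal t_gt0)).
pose sigma := [ffun i => sg (inl i)].
have inj_sigma : injectiveb sigma.
  by apply/injectiveP => i j; rewrite !ffunE => /inj_sg [].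
have weightE : ((transversal_weight A sigma)%:Z = \sum_x (u x - p (sg x)))%R.
  rewrite big_sumType /= [X in (_ + X)%R]big1 ?addr0 => [|d _]; last by rewrite tight.
  by rewrite -natz natr_sum; apply: eq_bigr => i _; rewrite tight ffunE natz.
have pad_le d : (u (inr d) <= p j0)%R by have := feas (inr d) j0; rewrite subr_le0.
exists (fun i => u (inl i) - p j0)%R, (fun j => p j - p j0)%R, j0; split.
- by move=> i j; have := feas (inl i) j; rewrite opprB addrA subrK.
- by move=> j; rewrite subr_ge0 p_min.
- by rewrite subrr.
have le_weight : ((tropdet A)%:Z <= (transversal_weight A sigma)%:Z)%R.
  by rewrite lez_nat tropdet_le_weight.
apply: le_trans le_weight _.
rewrite weightE sum_sub_bij; last by apply: inj_card_bij inj_sg _; rewrite card_pad.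
rewrite big_sumType /= !sumrB !sumr_const !card_ord.
have : (\sum_(d < t - s) u (inr d) <= \sum_(d < t - s) p j0)%R.
  by apply: ler_sum => d _; apply: pad_le.
rewrite sumr_const card_ord => pad_sum.
set U := (\sum_(i < s) _)%R; set P := (\sum_(i < t) _)%R.
have -> : (U - p j0 *+ s - (P - p j0 *+ t) = U + p j0 *+ (t - s) - P)%R.
  by rewrite mulrnBr //; ring.
by rewrite lerD2r lerD2l.
Qed.

Section DualValue.
Variables (s t : nat) (A : 'M[nat]_(s, t)) (u : 'I_s -> int) (p : 'I_t -> int).
Hypothesis feasible : forall i j, (u i - p j <= (A i j)%:Z)%R.

Lemma sum_potential_le_col j0 : p j0 = 0%R -> (\sum_i u i <= (\sum_i A i j0)%:Z)%R.
Proof.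
move=> pj0; rewrite -natz natr_sum; apply: ler_sum => i _.
by have := feasible i j0; rewrite pj0 subr0 natz.
Qed.

Lemma sum_potential_ge_row i1 :
  (t%:Z * u i1 - (\sum_j A i1 j)%:Z <= \sum_j p j)%R.
Proof.
rewrite -[Posz (\sum_j _)]natz natr_sum -[Posz t]natz mulr_natl.
rewrite -[t in (_ *+ t)%R]card_ord -sumr_const -sumrB.
by apply: ler_sum => j _; have := feasible i1 j; rewrite natz lerBlDl addrC -lerBlDl.
Qed.

Lemma sum_potential_le_max i1 : (forall i, u i <= u i1)%R ->
  (\sum_i u i <= s%:Z * u i1)%R.
Proof.
move=> u_max; rewrite -natz mulr_natl -[s in (_ *+ s)%R]card_ord -sumr_const.
by apply: ler_sum => i _; apply: u_max.
Qed.

End DualValue.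

Lemma dual_value_bound (n k l q r : nat) (X Y L : int) :
  (X <= ((q * n + r) * k)%N%:Z)%R -> (X <= (n * k)%N%:Z * L)%R ->
  ((n * l)%N%:Z * L - ((q * n + r) * l)%N%:Z <= Y)%R -> (0 <= Y)%R ->
  (X - Y <= Num.max ((n * k * q)%N%:Z)
                    ((n * k * q)%N%:Z + (r * (k + l))%N%:Z - (n * l)%N%:Z))%R.
Proof.
move=> X_col X_max Y_row Y_ge0; rewrite le_max.
have [le_Lq|lt_qL] := lerP L q%:Z.
  have : ((n * k)%N%:Z * L <= (n * k)%N%:Z * q%:Z)%R by rewrite ler_wpM2l.
  by move=> ?; apply/orP; left; lia.
have : ((n * l)%N%:Z * q.+1%:Z <= (n * l)%N%:Z * L)%R by rewrite ler_wpM2l //; lia.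
by move=> ?; apply/orP; right; lia.
Qed.

Theorem theorem5p2 (k l n m q r : nat) :
  0 < k -> k <= l -> coprime k l -> 0 < n ->
  m = q * n + r -> r < n ->
  U_le k l m n
    (Num.max ((n * k * q)%N%:Z)
             ((n * k * q)%N%:Z + (r * (k + l))%N%:Z - (n * l)%N%:Z))%R.
Proof.
move=> k_gt0 le_kl _ n_gt0 -> _ A [rowA colA].
have le_nk_nl : n * k <= n * l by rewrite leq_mul2l le_kl orbT.
have nl_gt0 : 0 < n * l by rewrite muln_gt0 n_gt0 (leq_trans k_gt0 le_kl).
have nk_gt0 : 0 < n * k by rewrite muln_gt0 n_gt0 k_gt0.
have [u [p [j0 [feas p_ge0 pj0 trop]]]] := tropdet_le_dual A le_nk_nl nl_gt0.
have [i1 _ u_max] := arg_maxP u (isT : predT (Ordinal nk_gt0)).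
apply: le_trans trop (dual_value_bound (L := u i1) _ _ _ _).
- by rewrite -(colA j0); apply: sum_potential_le_col.
- exact: sum_potential_le_max (fun i => u_max i isT).
- by rewrite -(rowA i1); apply: sum_potential_ge_row.
- exact: sumr_ge0.
Qed.
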